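(* Let $P\subset\mathbb{R}^n$ be the moment polytope of a compact toric manifold, with the notation of the context. Then every formal series of the form $$\sum_{k=1}^{\infty}a_k\,\mathfrak w_1^{e_{k,1}}\cdots\mathfrak w_m^{e_{k,m}}\,w_{m+1}^{e_{k,m+1}}\cdots w_B^{e_{k,B}}\,z_1^{f_{k,1}}\cdots z_m^{f_{k,m}},$$ where $a_k\in\Lambda_0$, $\lim_{k\to\infty}\mathfrak v_T(a_k)=\infty$, $e_{k,i}\in\mathbb{Z}$ for $i\le m$, $e_{k,i}\in\mathbb{Z}_{\ge0}$ for $i>m$, and $f_{k,j}\in\mathbb{Z}_{\ge0}$, is an element of $\Lambda_0^P\langle\!\langle\mathfrak w,\mathfrak w^{-1},w,y,y^{-1}\rangle\!\rangle$. Conversely, every element of $\Lambda_0^P\langle\!\langle\mathfrak w,\mathfrak w^{-1},w,y,y^{-1}\rangle\!\rangle$ can be written as a series of this form.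
   Context: $R$ is a field containing $\mathbb{Q}$. $\Lambda$ is the universal Novikov field of formal sums $\sum_i a_iT^{\lambda_i}$ with $a_i\in R$, $\lambda_i\in\mathbb{R}$ increasing to $\infty$; $\mathfrak v_T(\sum a_iT^{\lambda_i})=\inf\{\lambda_i: a_i\ne0\}$; $\Lambda_0=\{x:\mathfrak v_T(x)\ge0\}$. The polytope: $P=\{u\in\mathbb{R}^n:\ \ell_j(u)\ge0,\ j=1,\dots,m\}$, $\ell_j(u)=\langle\vec v_j,u\rangle-\lambda_j$, with $\vec v_j=(v_{j,1},\dots,v_{j,n})\in\mathbb{Z}^n$ the primitive inward normals to the $m$ facets; $P$ is a Delzant polytope (the moment polytope of a compact toric manifold: each vertex lies on exactly $n$ facets whose normals form a $\mathbb{Z}$-basis of $\mathbb{Z}^n$). Fix an integer $B\ge m$. Consider the ring $\Lambda[\mathfrak w_1^{\pm1},\dots,\mathfrak w_m^{\pm1},w_{m+1},\dots,w_B,y_1^{\pm1},\dots,y_n^{\pm1}]$. For $u\in\operatorname{Int}P$ define $\mathfrak v_T^u\big(\sum_k a_k\,\mathfrak w^{e_k}w^{e'_k}y_1^{f_{k,1}}\cdots y_n^{f_{k,n}}\big)=\inf_k\{\mathfrak v_T(a_k)+\langle f_k,u\rangle: a_k\neq0\}$ (the variables $\mathfrak w,w$ have weight $0$), and $\mathfrak v_T^P(x)=\inf\{\mathfrak v_T^u(x): u\in\operatorname{Int}P\}$, a non-Archimedean valuation. $\Lambda^P\langle\!\langle\mathfrak w,\mathfrak w^{-1},w,y,y^{-1}\rangle\!\rangle$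 denotes the completion with respect to $\mathfrak v_T^P$, and $\Lambda_0^P\langle\!\langle\mathfrak w,\mathfrak w^{-1},w,y,y^{-1}\rangle\!\rangle=\{x:\mathfrak v_T^P(x)\ge0\}$. Finally, $z_j=T^{-\lambda_j}y_1^{v_{j,1}}\cdots y_n^{v_{j,n}}$ for $j=1,\dots,m$ (so that $\mathfrak v_T^u(z_j)=\ell_j(u)$). *)

From HB Require Import structures.
From mathcomp Require Import all_boot all_order all_algebra.
From mathcomp Require Import reals.
Set Implicit Arguments. Unset Strict Implicit. Unset Printing Implicit Defensive.
Import Order.TTheory GRing.Theory Num.Theory.
Local Open Scope ring_scope.

Section Toric.
Variables (RR : realType) (m n : nat).
(* normals v j = (v_{j,1},...,v_{j,n}) and constants lam j = lambda_j *)
Variables (v : 'I_m -> 'I_n -> int) (lam : 'I_m -> RR).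

Definition pairing (f : 'I_n -> int) (u : 'I_n -> RR) : RR :=
  \sum_(i < n) (f i)%:~R * u i.

Definition ell (j : 'I_m) (u : 'I_n -> RR) : RR := pairing (v j) u - lam j.

Definition inP (u : 'I_n -> RR) : Prop := forall j, 0 <= ell j u.

Definition intP (u : 'I_n -> RR) : Prop :=
  exists eps : RR, 0 < eps /\
    forall w : 'I_n -> RR, (forall i, `|w i - u i| < eps) -> inP w.

Definition is_vertex (u : 'I_n -> RR) : Prop :=
  inP u /\ forall a b : 'I_n -> RR, inP a -> inP b ->
    (forall i, u i = (a i + b i) / 2%:R) -> a = b.

Definition inFace (j : 'I_m) (u : 'I_n -> RR) : Prop := inP u /\ ell j u = 0.

(* F_j has affine dimension (at least, hence exactly) n-1, i.e. is a facet *)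
Definition is_facet (j : 'I_m) : Prop :=
  exists (p0 : 'I_n -> RR) (p : 'I_n.-1 -> 'I_n -> RR),
    inFace j p0 /\ (forall k, inFace j (p k)) /\
    forall c : 'I_n.-1 -> RR,
      (forall x, \sum_(k < n.-1) c k * (p k x - p0 x) = 0) -> forall k, c k = 0.

Definition zbasis (J : {set 'I_m}) : Prop :=
  (forall x : 'I_n -> int, exists c : 'I_m -> int,
      (forall j, j \notin J -> c j = 0) /\
      forall i, x i = \sum_(j < m) c j * v j i) /\
  (forall c : 'I_m -> int, (forall j, j \notin J -> c j = 0) ->
      (forall i, \sum_(j < m) c j * v j i = 0) -> forall j, c j = 0).

Definition primitive (x : 'I_n -> int) : Prop :=
  forall d : int, (forall i, (d %| x i)%Z) -> `|d|%N = 1%N.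

Definition touching (u : 'I_n -> RR) : {set 'I_m} := [set j | ell j u == 0].

Definition delzant : Prop :=
  [/\ exists M : RR, forall u, inP u -> forall i, `|u i| <= M,
      exists u, intP u,
      forall j, primitive (v j),
      forall j, is_facet j &
      [/\ forall j k, j != k -> ~ (forall u, inFace j u <-> inFace k u),
          forall u, is_vertex u -> #|touching u| = n
          & forall u, is_vertex u -> zbasis (touching u)]].

Variable (F : fieldType) (B : nat).

(* a monomial  w^e  w'^e'  y^f  (w'_i stands for w_{m+1+i}) *)
Definition mono : Type :=
  ({ffun 'I_m -> int} * {ffun 'I_(B - m) -> nat} * {ffun 'I_n -> int})%type.

(* An element of Lambda: coefficient function lambda |-> a_lambda, with
   support finite below every bound (i.e. exponents increasing to infinity). *)
Definition is_nov (c : RR -> F) : Prop :=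
  forall E : RR, exists s : seq RR, forall l, c l != 0 -> l < E -> l \in s.

Definition nov0 (c : RR -> F) : Prop := forall l, c l != 0 -> 0 <= l.

(* elements of Lambda[w^±,w,y^±], given by their coefficients:
   g mo l = coefficient of T^l * mo *)
Definition ser : Type := mono -> RR -> F.

Definition is_poly (g : ser) : Prop :=
  (exists s : seq mono, forall mo l, g mo l != 0 -> mo \in s) /\
  forall mo, is_nov (g mo).

Definition ser_sub (g h : ser) : ser := fun mo l => g mo l - h mo l.

Definition val_ge (g : ser) (E : RR) : Prop :=
  forall u, intP u -> forall mo l, g mo l != 0 -> E <= l + pairing mo.2 u.

(* sequences of polynomials that are Cauchy for v_T^P (elements of the completion) *)
Definition cauchyP (g : nat -> ser) : Prop :=
  (forall N, is_poly (g N)) /\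
  forall E : RR, exists N, forall p q, (N <= p)%N -> (N <= q)%N ->
     val_ge (ser_sub (g p) (g q)) E.

(* the limit of g lies in Lambda_0^P<<w,w^-1,w,y,y^-1>> *)
Definition inLam0P (g : nat -> ser) : Prop :=
  cauchyP g /\ exists N, forall p, (N <= p)%N -> val_ge (g p) 0.

Definition same_limP (g h : nat -> ser) : Prop :=
  forall E : RR, exists N, forall p, (N <= p)%N -> val_ge (ser_sub (g p) (h p)) E.

(* exponent of y in z^f, z_j = T^{-lam_j} y^{v_j} *)
Definition yexp (f : 'I_m -> nat) : {ffun 'I_n -> int} :=
  [ffun i => \sum_(j < m) (f j)%:Z * v j i].

Definition tshift (f : 'I_m -> nat) : RR := \sum_(j < m) (f j)%:R * lam j.

(* the k-th term  a_k w^{e_k} w'^{e'_k} z^{f_k} *)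
Definition sterm (a : nat -> RR -> F) (e : nat -> {ffun 'I_m -> int})
  (e' : nat -> {ffun 'I_(B - m) -> nat}) (f : nat -> 'I_m -> nat) (k : nat) : ser :=
  fun mo l => if mo == (e k, e' k, yexp (f k)) then a k (l + tshift (f k)) else 0.

Definition psum a e e' f (N : nat) : ser :=
  fun mo l => \sum_(k < N) sterm a e e' f k mo l.

Definition coeff_ok (a : nat -> RR -> F) : Prop :=
  (forall k, is_nov (a k) /\ nov0 (a k)) /\
  forall E : RR, exists N, forall k, (N <= k)%N -> forall l, a k l != 0 -> E <= l.

End Toric.

From Pilot Require Import Defs.
From HB Require Import structures.
From mathcomp Require Import all_boot all_order all_algebra.
From mathcomp Require Import reals.
From mathcomp Require Import ring lra zify.
From Stdlib Require Import ClassicalEpsilon FunctionalExtensionality Classical.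
Set Implicit Arguments. Unset Strict Implicit. Unset Printing Implicit Defensive.
Import Order.TTheory GRing.Theory Num.Theory.
Import Pilot.Defs.
Local Open Scope ring_scope.

(* On P one has v_T^u(z_j) = ell_j(u) >= 0, so a series in the z_j whose
   coefficients have valuations tending to infinity has Cauchy partial sums of
   nonnegative valuation.

   Conversely, the Delzant condition shows that every f in Z^n lies in the
   normal cone of some vertex u0: f = sum_j c_j v_j with c_j in N supported on
   the facets through u0.  To find u0, descend from an interior point to a
   vertex without increasing <f, .>, and while f has a negative coordinate in
   the Z-basis of normals at the current vertex, pivot along the dual edge,
   which strictly decreases <f, .>; this terminates because vertices are
   determined by their facets.  Then y^f = T^(sum c_j lambda_j) z^c and
   inf_{Int P} <f, .> = <f, u0> = sum c_j lambda_j, so rewriting y^f as a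
   monomial in z preserves valuations.  An element of the completion is the
   sum of the telescoping differences of a Cauchy sequence of polynomials with
   valuations increasing to infinity; listing the finitely many monomials of
   each difference, block after block, gives the series. *)

Section Pairing.
Variables (RR : realType) (n : nat).
Implicit Types (f : 'I_n -> int) (a b u d : 'I_n -> RR).

Lemma pairing_ext f a b : a =1 b -> pairing f a = pairing f b.
Proof. by move=> eq_ab; apply: eq_bigr => i _; rewrite eq_ab. Qed.

Lemma pairing_comb f a b (x y : RR) :
  pairing f (fun i => x * a i + y * b i) = x * pairing f a + y * pairing f b.
Proof. by rewrite /pairing !mulr_sumr -big_split /=; apply: eq_bigr => i _; ring. Qed.

Lemma pairingB f a b : pairing f (fun i => a i - b i) = pairing f a - pairing f b.
Proof. by rewrite /pairing -sumrB; apply: eq_bigr => i _; ring. Qed.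

Lemma pairingN f d : pairing f (fun i => - d i) = - pairing f d.
Proof. by rewrite /pairing -sumrN; apply: eq_bigr => i _; ring. Qed.

Lemma pairing_ray f u d (t : RR) :
  pairing f (fun i => u i + t * d i) = pairing f u + t * pairing f d.
Proof. by rewrite -[pairing f u]mul1r -pairing_comb; apply: pairing_ext => i; rewrite mul1r. Qed.

Lemma pairing_delta (i0 : 'I_n) u : pairing (fun i => (i0 == i)%:Z) u = u i0.
Proof.
rewrite /pairing (bigD1 i0) //= eqxx mul1r big1 ?addr0 // => i ne_i.
by rewrite eq_sym (negbTE ne_i) mul0r.
Qed.

Lemma pairing_lincomb m (v : 'I_m -> 'I_n -> int) (c : 'I_m -> int) f u :
  (forall i, f i = \sum_(j < m) c j * v j i) ->
  pairing f u = \sum_(j < m) (c j)%:~R * pairing (v j) u.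
Proof.
move=> f_eq; rewrite /pairing.
under eq_bigr => i _ do rewrite f_eq rmorph_sum mulr_suml.
rewrite exchange_big /=; apply: eq_bigr => j _.
by rewrite mulr_sumr; apply: eq_bigr => i _; rewrite intrM; ring.
Qed.

End Pairing.

Section Polytope.
Variables (RR : realType) (m n : nat) (v : 'I_m -> 'I_n -> int) (lam : 'I_m -> RR).
Implicit Types (f : 'I_n -> int) (u w d : 'I_n -> RR).

Lemma ell_ray j u d (t : RR) :
  ell v lam j (fun i => u i + t * d i) = ell v lam j u + t * pairing (v j) d.
Proof. by rewrite /ell pairing_ray; ring. Qed.

Lemma intP_inP u : intP v lam u -> inP v lam u.
Proof. by case=> eps [eps_gt0 ball_in]; apply: ball_in => i; rewrite subrr normr0. Qed.

Definition face_direction u d :=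
  (exists i, d i != 0) /\ forall j, j \in touching v lam u -> pairing (v j) d = 0.

Lemma is_vertex_rigid u : inP v lam u -> ~ (exists d, face_direction u d) ->
  is_vertex v lam u.
Proof.
move=> Pu no_dir; split=> // a b Pa Pb mid_u.
apply: NNPP => ne_ab; apply: no_dir; exists (fun i => a i - b i); split.
  apply: NNPP => all0; apply: ne_ab; apply: functional_extensionality => i.
  apply/eqP; rewrite -subr_eq0; apply: NNPP => /negP nz; apply: all0.
  by exists i.
move=> j; rewrite inE => /eqP ell_u.
have : ell v lam j u = (ell v lam j a + ell v lam j b) / 2%:R.
  rewrite /ell (@pairing_ext _ _ _ _ (fun i => 2%:R^-1 * a i + 2%:R^-1 * b i)).
    by rewrite pairing_comb; field.
  by move=> i; rewrite mid_u; field.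
move: (Pa j) (Pb j); rewrite ell_u pairingB /ell; lra.
Qed.

Hypothesis hD : delzant v lam.

Lemma ray_leaves_P u d : inP v lam u -> (exists i, d i != 0) ->
  exists j, pairing (v j) d < 0.
Proof.
move=> Pu [i0 nz_d]; apply: NNPP => no_exit.
have pos_d j : 0 <= pairing (v j) d.
  by rewrite leNgt; apply/negP => neg; apply: no_exit; exists j.
have [M bound_P] : exists M : RR, forall u, inP v lam u -> forall i, `|u i| <= M.
  by case: hD.
have d_gt0 : 0 < `|d i0| by rewrite normr_gt0.
pose t := (M + `|u i0| + 1) / `|d i0|.
have t_ge0 : 0 <= t.
  apply: divr_ge0; last exact: ltW.
  by have := bound_P u Pu i0; have := normr_ge0 (u i0); lra.
have Pt : inP v lam (fun i => u i + t * d i).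
  by move=> j; rewrite ell_ray; apply: addr_ge0; [apply: Pu|apply: mulr_ge0].
have td_eq : `|t * d i0| = M + `|u i0| + 1.
  by rewrite normrM (ger0_norm t_ge0) /t divfK // gt_eqF.
have := ler_normB (u i0 + t * d i0) (u i0); rewrite addrAC subrr add0r.
by have := bound_P _ Pt i0; lra.
Qed.

Lemma exit_facet u d : inP v lam u -> (exists i, d i != 0) ->
  exists j t, [/\ pairing (v j) d < 0, t * - pairing (v j) d = ell v lam j u,
                  0 <= t & inP v lam (fun i => u i + t * d i)].
Proof.
move=> Pu nz_d; have [j0 neg_j0] := ray_leaves_P Pu nz_d.
pose hit j := ell v lam j u / - pairing (v j) d.
have [j1 neg_j1 min_j1] := @arg_minP _ _ _ j0 (fun j => pairing (v j) d < 0) hit neg_j0.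
have dj1_gt0 : 0 < - pairing (v j1) d by rewrite oppr_gt0.
have hit_ge0 j : 0 < - pairing (v j) d -> 0 <= hit j.
  by move=> dj; apply: divr_ge0; [apply: Pu|apply: ltW].
exists j1, (hit j1); split=> //; first by rewrite divfK // gt_eqF.
  exact: hit_ge0.
move=> j; rewrite ell_ray; case: (ltP (pairing (v j) d) 0) => [neg_j|pos_j].
  have dj_gt0 : 0 < - pairing (v j) d by rewrite oppr_gt0.
  have := min_j1 j neg_j; rewrite /hit ler_pdivlMr // => le_hit; lra.
by apply: addr_ge0; [apply: Pu|apply: mulr_ge0 => //; apply: hit_ge0].
Qed.

(* After replacing [d] by [-d] if needed, [<f, .>] does not increase up to
   the first new facet hit. *)
Lemma face_direction_descent f u d : inP v lam u -> face_direction u d ->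
  exists w, [/\ inP v lam w, pairing f w <= pairing f u &
                (#|~: touching v lam w| < #|~: touching v lam u|)%N].
Proof.
move=> Pu dir_d.
wlog fd_le0 : d dir_d / pairing f d <= 0 => [wlog_le0|].
  have [le0|gt0] := leP (pairing f d) 0; first exact: wlog_le0 d dir_d le0.
  apply: (wlog_le0 (fun i => - d i)); last by rewrite pairingN; lra.
  case: dir_d => [[i nz] par_d]; split; first by exists i; rewrite oppr_eq0.
  by move=> j tj; rewrite pairingN par_d ?oppr0.
case: dir_d => nz_d par_d.
have [j1 [t [neg_j1 t_eq t_ge0 Pw]]] := exit_facet Pu nz_d.
exists (fun i => u i + t * d i); split=> //.
  by rewrite pairing_ray; have := mulr_ge0_le0 t_ge0 fd_le0; lra.
apply: proper_card; rewrite properE; apply/andP; split.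
  apply/subsetP => j; rewrite !inE; apply: contra => /eqP ell0.
  by rewrite -ell0 ell_ray par_d ?mulr0 ?addr0 // inE ell0.
apply/subsetPn; exists j1; rewrite !inE; last first.
  by rewrite negbK ell_ray -t_eq; apply/eqP; ring.
by apply/negP => tj1; move: neg_j1; rewrite par_d ?ltxx // inE.
Qed.

Lemma exists_vertex_below f u : inP v lam u ->
  exists w, is_vertex v lam w /\ pairing f w <= pairing f u.
Proof.
move: {2}#|~: touching v lam u| (leqnn #|~: touching v lam u|) => k.
elim: k u => [|k IH] u le_k Pu;
  (have [[d dir_d]|no_dir] := classic (exists d, face_direction u d);
   last by exists u; split=> //; apply: is_vertex_rigid).
  by have [w [_ _]] := face_direction_descent f Pu dir_d; lia.
have [w [Pw le_fw lt_w]] := face_direction_descent f Pu dir_d.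
have [w' [vert_w' le_fw']] := IH w ltac:(lia) Pw.
by exists w'; split=> //; apply: le_trans le_fw.
Qed.

End Polytope.

Lemma zbasis_dual m n (v : 'I_m -> 'I_n -> int) (J : {set 'I_m}) j0 :
  zbasis v J -> j0 \in J ->
  exists d : 'I_n -> int, forall j, j \in J -> \sum_(i < n) v j i * d i = (j == j0)%:Z.
Proof.
move=> [span free] j0J.
have /fin_all_exists [D D_spec] : forall i : 'I_n, exists D : 'I_m -> int,
    (forall j, j \notin J -> D j = 0) /\
    forall i', (i == i')%:Z = \sum_(j < m) D j * v j i' by move=> i; apply: span.
exists (fun i => D i j0) => j jJ.
pose c j' := \sum_(i < n) v j i * D i j' - (j == j')%:Z.
suff /eqP : c j0 = 0 by rewrite subr_eq0 => /eqP.
apply: free => [j' j'J|i0].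
  rewrite /c big1 ?sub0r => [|i _]; last by rewrite (proj1 (D_spec i)) ?mulr0.
  by case: eqP j'J => [<-|_ _]; rewrite ?jJ ?oppr0.
have -> : \sum_(j' < m) c j' * v j' i0 =
    \sum_(i < n) v j i * (i == i0)%:Z - \sum_(j' < m) (j == j') %:Z * v j' i0.
  rewrite /c; under eq_bigr => j' _ do rewrite mulrBl mulr_suml.
  rewrite sumrB exchange_big /=; congr (_ - _); apply: eq_bigr => i _.
  by rewrite (proj2 (D_spec i) i0) mulr_sumr; apply: eq_bigr => j' _; rewrite mulrA.
rewrite (bigD1 i0) // (bigD1 j) //= !eqxx mulr1 mul1r !big1 ?addr0 ?subrr //.
  by move=> j' ne_j'; rewrite eq_sym (negbTE ne_j') mul0r.
by move=> i ne_i; rewrite (negbTE ne_i) mulr0.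
Qed.

Section Vertices.
Variables (RR : realType) (m n : nat) (v : 'I_m -> 'I_n -> int) (lam : 'I_m -> RR).
Hypothesis hD : delzant v lam.
Implicit Types (f : 'I_n -> int) (u w : 'I_n -> RR).

Lemma vertex_zbasis u : is_vertex v lam u -> zbasis v (touching v lam u).
Proof. by case: hD => _ _ _ _ [_ _]; apply. Qed.

Lemma vertex_touching_inj u w : is_vertex v lam u -> is_vertex v lam w ->
  touching v lam u = touching v lam w -> u = w.
Proof.
move=> vert_u vert_w tuw; have [span _] := vertex_zbasis vert_u.
apply: functional_extensionality => i0.
have [c [c_supp c_eq]] := span (fun i => (i0 == i)%:Z).
have coord x : (forall j, j \in touching v lam u -> ell v lam j x = 0) ->
    x i0 = \sum_(j < m) (c j)%:~R * lam j.
  move=> ell_x; rewrite -pairing_delta (pairing_lincomb x c_eq).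
  apply: eq_bigr => j _; case: (boolP (j \in touching v lam u)) => tj.
    by move/eqP: (ell_x j tj); rewrite subr_eq0 => /eqP ->.
  by rewrite c_supp // !mul0r.
rewrite (coord u) ?(coord w) // => j; first by rewrite tuw inE => /eqP.
by rewrite inE => /eqP.
Qed.

(* If [f] has a negative coordinate on the basis of normals at [u], moving
   along the dual direction of that normal strictly decreases [<f, .>]. *)
Lemma vertex_pivot u f (c : 'I_m -> int) j0 : is_vertex v lam u ->
  (forall j, j \notin touching v lam u -> c j = 0) ->
  (forall i, f i = \sum_(j < m) c j * v j i) -> c j0 < 0 ->
  exists w, inP v lam w /\ pairing f w < pairing f u.
Proof.
move=> vert_u c_supp f_eq cj0_lt0; set J := touching v lam u.
have Pu : inP v lam u by case: vert_u.
have j0J : j0 \in J by apply: contraLR cj0_lt0 => /c_supp ->; rewrite ltxx.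
have [D D_dual] := zbasis_dual (vertex_zbasis vert_u) j0J.
pose d i := (D i)%:~R : RR.
have pair_d j : j \in J -> pairing (v j) d = ((j == j0)%:Z)%:~R.
  by move=> jJ; rewrite -D_dual // rmorph_sum; apply: eq_bigr => i _; rewrite rmorphM.
have f_d : pairing f d = (c j0)%:~R.
  rewrite (pairing_lincomb d f_eq) (bigD1 j0) //= pair_d // eqxx mulr1 big1 ?addr0 //.
  move=> j ne_j; case: (boolP (j \in J)) => jJ; last by rewrite c_supp // mul0r.
  by rewrite pair_d // (negbTE ne_j) mulr0.
have nz_d : exists i, d i != 0.
  apply: NNPP => all0; move: (pair_d j0 j0J); rewrite eqxx /pairing big1.
    by move/eqP; rewrite eq_sym oner_eq0.
  move=> i _; suff -> : d i = 0 by rewrite mulr0.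
  by apply/eqP; apply: NNPP => nz; apply: all0; exists i; apply/negP.
have [j1 [t [neg_j1 t_eq t_ge0 Pw]]] := exit_facet hD Pu nz_d.
have j1J : j1 \notin J.
  by apply/negP => j1J; move: neg_j1; rewrite pair_d //; case: (j1 == j0) => /=; lra.
have ell_gt0 : 0 < ell v lam j1 u by rewrite lt_neqAle Pu andbT eq_sym; rewrite inE in j1J.
have t_gt0 : 0 < t.
  by rewrite lt_neqAle t_ge0 andbT; apply: contraTneq ell_gt0 => t0; rewrite -t_eq -t0 mul0r ltxx.
exists (fun i => u i + t * d i); split=> //.
rewrite pairing_ray f_d.
have : 0 < t * - (c j0)%:~R by apply: mulr_gt0; rewrite // oppr_gt0 ltrz0.
lra.
Qed.

Definition in_normal_cone f u := exists c : 'I_m -> nat,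
  (forall j, (c j != 0)%N -> j \in touching v lam u) /\
  forall i, f i = \sum_(j < m) (c j)%:Z * v j i.

Lemma normal_cone_or_descent f u : is_vertex v lam u ->
  in_normal_cone f u \/ exists w, is_vertex v lam w /\ pairing f w < pairing f u.
Proof.
move=> vert_u; have [span _] := vertex_zbasis vert_u; have [c [c_supp f_eq]] := span f.
have [/forallP c_ge0|/forallPn [j0]] := boolP [forall j, 0 <= c j].
  left; exists (fun j => `|c j|%N); split.
    by move=> j; apply: contraNT => /c_supp ->.
  by move=> i; rewrite f_eq; apply: eq_bigr => j _; rewrite abszE ger0_norm.
rewrite -ltNge => cj0_lt0; right.
have [w [Pw lt_w]] := vertex_pivot vert_u c_supp f_eq cj0_lt0.
have [w' [vert_w' le_w']] := exists_vertex_below hD f Pw.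
by exists w'; split=> //; apply: le_lt_trans lt_w.
Qed.

Lemma exists_normal_cone_vertex f : exists u, is_vertex v lam u /\ in_normal_cone f u.
Proof.
have [u1 int_u1] : exists u, intP v lam u by case: hD.
have [w0 [vert_w0 _]] := exists_vertex_below hD f (intP_inP int_u1).
(* [s] lists the facet sets of all vertices strictly below [u]; each pivot
   removes one, since a vertex is determined by its facets. *)
suff: forall k (s : seq {set 'I_m}) u, (size s <= k)%N -> is_vertex v lam u ->
    (forall w, is_vertex v lam w -> pairing f w < pairing f u -> touching v lam w \in s) ->
    exists u0, is_vertex v lam u0 /\ in_normal_cone f u0.
  move=> /(_ _ (enum [set: {set 'I_m}]) w0 (leqnn _) vert_w0); apply.
  by move=> w _ _; rewrite mem_enum inE.
elim=> [|k IH] s u size_s vert_u below_u;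
  (have [cone_u|[w [vert_w lt_w]]] := normal_cone_or_descent f vert_u;
   first by exists u).
  by move: (below_u w vert_w lt_w); case: s size_s {below_u}.
apply: (IH [seq J <- s | J != touching v lam w] w) => //.
  rewrite size_filter -ltnS (leq_trans _ size_s) //.
  rewrite -(count_predC (fun J => J != touching v lam w) s) -{1}[count _ s]addn0.
  rewrite ltn_add2l -has_count; apply/hasP; exists (touching v lam w) => /=.
    exact: below_u w vert_w lt_w.
  by rewrite eqxx.
move=> w' vert_w' lt_w'; rewrite mem_filter (below_u w' vert_w' (lt_trans lt_w' lt_w)) andbT.
by apply: contraTneq lt_w' => /(vertex_touching_inj vert_w' vert_w) ->; rewrite ltxx.
Qed.

End Vertices.

Lemma le_segment_start (R : realFieldType) (c p0 p1 : R) :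
  (forall t, 0 < t -> t <= 1 -> c <= (1 - t) * p0 + t * p1) -> c <= p0.
Proof.
move=> seg; rewrite leNgt; apply/negP => p0_lt_c.
have gap_gt0 : 0 < c - p0 by rewrite subr_gt0.
pose D := `|p1 - p0|; have D_ge0 : 0 <= D := normr_ge0 _.
have den_gt0 : 0 < c - p0 + D by lra.
pose t := (c - p0) / (c - p0 + D).
have t_gt0 : 0 < t by apply: divr_gt0.
have t_le1 : t <= 1 by rewrite ler_pdivrMr // mul1r; lra.
have tD_lt : t * D < c - p0.
  by rewrite /t mulrAC ltr_pdivrMr //; nra.
have : t * (p1 - p0) <= t * D by apply: ler_wpM2l; [exact: ltW|exact: ler_norm].
by have := seg t t_gt0 t_le1; lra.
Qed.

Section Closure.
Variables (RR : realType) (m n : nat) (v : 'I_m -> 'I_n -> int) (lam : 'I_m -> RR).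
Implicit Types (f : 'I_n -> int) (u : 'I_n -> RR).

Lemma intP_segment u0 u1 (t : RR) : inP v lam u0 -> intP v lam u1 -> 0 < t -> t <= 1 ->
  intP v lam (fun i => (1 - t) * u0 i + t * u1 i).
Proof.
move=> Pu0 [eps [eps_gt0 ball_u1]] t_gt0 t_le1.
exists (t * eps); split=> [|w near_w j]; first exact: mulr_gt0.
pose w' i := (w i - (1 - t) * u0 i) / t.
have Pw' : inP v lam w'.
  apply: ball_u1 => i.
  have -> : w' i - u1 i = (w i - ((1 - t) * u0 i + t * u1 i)) / t.
    by rewrite /w'; field; rewrite gt_eqF.
  by rewrite normrM normfV (gtr0_norm t_gt0) ltr_pdivrMr // [eps * t]mulrC; apply: near_w.
rewrite /ell (@pairing_ext _ _ _ w (fun i => (1 - t) * u0 i + t * w' i)); last first.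
  by move=> i; rewrite /w'; field; rewrite gt_eqF.
have -> : pairing (v j) (fun i => (1 - t) * u0 i + t * w' i) - lam j =
    (1 - t) * ell v lam j u0 + t * ell v lam j w' by rewrite pairing_comb /ell; ring.
by apply: addr_ge0; apply: mulr_ge0; [rewrite subr_ge0|apply: Pu0|apply: ltW|apply: Pw'].
Qed.

Lemma inP_lower_bound (f : 'I_n -> int) u0 (E l : RR) :
  (exists u, intP v lam u) -> inP v lam u0 ->
  (forall u, intP v lam u -> E <= l + pairing f u) -> E <= l + pairing f u0.
Proof.
move=> [u1 int_u1] Pu0 bound_int; rewrite -lerBlDl.
apply: (@le_segment_start _ _ _ (pairing f u1)) => t t_gt0 t_le1.
by rewrite -pairing_comb lerBlDl; apply/bound_int/intP_segment.
Qed.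

Lemma pairing_yexp (c : 'I_m -> nat) u :
  pairing (yexp v c) u = tshift lam c + \sum_(j < m) (c j)%:R * ell v lam j u.
Proof.
rewrite (@pairing_lincomb _ _ _ v (fun j => (c j)%:Z)) => [|i]; last by rewrite ffunE.
by rewrite /tshift -big_split /=; apply: eq_bigr => j _; rewrite /ell; ring.
Qed.

Lemma tshift_le_pairing_yexp (c : 'I_m -> nat) u :
  inP v lam u -> tshift lam c <= pairing (yexp v c) u.
Proof.
move=> Pu; rewrite pairing_yexp lerDl; apply: sumr_ge0 => j _.
by apply: mulr_ge0 => //; apply: Pu.
Qed.

(* [y^f = T^(tshift c) z^c], and the valuation of [y^f] on [Int P] is attained
   at a vertex whose normal cone contains [f], where [<f, .> = tshift c]. *)
Lemma yexp_decomposition : delzant v lam -> forall f : {ffun 'I_n -> int},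
  exists c : 'I_m -> nat, yexp v c = f /\
    forall E l : RR,
      (forall u, intP v lam u -> E <= l + pairing f u) -> E <= l + tshift lam c.
Proof.
move=> hD f; have [u0 [vert_u0 [c [c_supp f_eq]]]] := exists_normal_cone_vertex hD f.
have yexp_c : yexp v c = f by apply/ffunP => i; rewrite ffunE f_eq.
exists c; split=> // E l bound_int.
have int_ex : exists u, intP v lam u by case: hD.
have Pu0 : inP v lam u0 by case: vert_u0.
move: (inP_lower_bound int_ex Pu0 bound_int).
rewrite -yexp_c pairing_yexp big1 ?addr0 // => j _.
have [->|nz_cj] := eqVneq (c j) 0%N; first by rewrite mul0r.
by move: (c_supp j nz_cj); rewrite inE => /eqP ->; rewrite mulr0.
Qed.

End Closure.

Lemma addr_neq0 (V : nmodType) (x y : V) : x + y != 0 -> x != 0 \/ y != 0.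
Proof. by have [->|] := eqVneq x 0; [rewrite add0r; right|left]. Qed.

Lemma sum_neq0 (V : nmodType) (I : eqType) (r : seq I) (G : I -> V) :
  \sum_(i <- r) G i != 0 -> exists2 i, i \in r & G i != 0.
Proof.
elim: r => [|x r IH]; rewrite ?big_nil ?eqxx // big_cons => /addr_neq0 [nz|/IH [i ir nz]].
  by exists x; rewrite ?mem_head.
by exists i; rewrite // in_cons ir orbT.
Qed.

Section Novikov.
Variables (RR : realType) (F : fieldType).
Implicit Types (c d : RR -> F).

Lemma is_nov0 : is_nov (fun _ : RR => 0 : F).
Proof. by move=> E; exists [::] => l; rewrite eqxx. Qed.

Lemma is_novD c d : is_nov c -> is_nov d -> is_nov (fun l => c l + d l).
Proof.
move=> nov_c nov_d E; have [s1 s1_c] := nov_c E; have [s2 s2_d] := nov_d E.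
exists (s1 ++ s2) => l /addr_neq0 [nz|nz] lt_E; rewrite mem_cat.
  by rewrite s1_c.
by rewrite s2_d ?orbT.
Qed.

Lemma is_novB c d : is_nov c -> is_nov d -> is_nov (fun l => c l - d l).
Proof.
move=> nov_c nov_d; apply: is_novD => // E; have [s s_d] := nov_d E.
by exists s => l; rewrite oppr_eq0; apply: s_d.
Qed.

Lemma is_nov_shift c (s : RR) : is_nov c -> is_nov (fun l => c (l + s)).
Proof.
move=> nov_c E; have [s0 s0_c] := nov_c (E + s).
exists [seq x - s | x <- s0] => l nz lt_E; rewrite -(addrK s l).
by apply: map_f; apply: s0_c; rewrite ?ltrD2r.
Qed.

Lemma is_nov_sum N (G : nat -> RR -> F) : (forall k, is_nov (G k)) ->
  is_nov (fun l => \sum_(k < N) G k l).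
Proof.
move=> nov_G; elim: N => [|N IH]; first by move=> E; exists [::] => l; rewrite big_ord0 eqxx.
have -> : (fun l => \sum_(k < N.+1) G k l) = (fun l => \sum_(k < N) G k l + G N l).
  by apply: functional_extensionality => l; rewrite big_ord_recr.
exact: is_novD.
Qed.

End Novikov.

Section Series.
Variables (F : fieldType) (RR : realType) (m n B : nat)
  (v : 'I_m -> 'I_n -> int) (lam : 'I_m -> RR).
Variables (a : nat -> RR -> F) (e : nat -> {ffun 'I_m -> int})
  (e' : nat -> {ffun 'I_(B - m) -> nat}) (f : nat -> 'I_m -> nat).
Local Notation sterm := (sterm v lam a e e' f).
Local Notation psum := (psum v lam a e e' f).

Lemma sterm_neq0 k mo l : sterm k mo l != 0 ->
  mo = (e k, e' k, yexp v (f k)) /\ a k (l + tshift lam (f k)) != 0.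
Proof. by rewrite /sterm; case: (eqVneq mo (e k, e' k, yexp v (f k))) => [->|_]; rewrite ?eqxx. Qed.

(* [v_T^u] of the [k]-th term is at least [v_T(a_k)], since [v_T^u(z_j) >= 0]. *)
Lemma sterm_val_ge k (E : RR) u mo l :
  (forall l', a k l' != 0 -> E <= l') -> inP v lam u ->
  sterm k mo l != 0 -> E <= l + pairing mo.2 u.
Proof.
move=> val_ak Pu /sterm_neq0 [-> /val_ak le_E]; apply: le_trans le_E _.
by rewrite lerD2l; apply: tshift_le_pairing_yexp.
Qed.

Lemma psum_neq0 N mo l : psum N mo l != 0 ->
  exists2 k, (k < N)%N & sterm k mo l != 0.
Proof.
rewrite /psum -(big_mkord xpredT (fun k => sterm k mo l)) => /sum_neq0 [k].
by rewrite mem_index_iota; exists k.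
Qed.

Lemma psum_split N p mo l : (N <= p)%N ->
  psum p mo l = \sum_(0 <= k < N) sterm k mo l + \sum_(N <= k < p) sterm k mo l.
Proof.
by move=> le_Np; rewrite /psum -(big_mkord xpredT (fun k => sterm k mo l)) (big_cat_nat _ le_Np).
Qed.

Hypothesis a_ok : coeff_ok a.

Lemma psum_is_poly N : is_poly (psum N).
Proof.
split.
  exists [seq (e k, e' k, yexp v (f k)) | k <- iota 0 N] => mo l.
  by move=> /psum_neq0 [k lt_kN /sterm_neq0 [-> _]]; apply: map_f; rewrite mem_iota.
move=> mo; apply: (@is_nov_sum _ _ N (fun k l => sterm k mo l)) => k; rewrite /sterm.
by case: eqP => _; [apply/is_nov_shift/(proj1 (proj1 a_ok k))|apply: is_nov0].
Qed.

Lemma psum_inLam0P : inLam0P v lam psum.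
Proof.
split; first split; first exact: psum_is_poly.
  move=> E; have [N val_tail] := proj2 a_ok E; exists N => p q le_Np le_Nq u int_u mo l.
  rewrite /ser_sub /= (psum_split _ _ le_Np) (psum_split _ _ le_Nq) opprD addrACA subrr add0r.
  have tail_ge r : \sum_(N <= k < r) sterm k mo l != 0 -> E <= l + pairing mo.2 u.
    move=> /sum_neq0 [k]; rewrite mem_index_iota => /andP [le_Nk _].
    exact/sterm_val_ge/intP_inP/int_u/val_tail.
  by move=> /addr_neq0 [/tail_ge //|]; rewrite oppr_eq0 => /tail_ge.
exists 0%N => p _ u int_u mo l /psum_neq0 [k _].
exact/sterm_val_ge/intP_inP/int_u/(proj2 (proj1 a_ok k)).
Qed.

End Series.

Lemma exists_nat_ge (R : archiRealDomainType) (x : R) : exists K : nat, x <= K%:R.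
Proof.
exists (Num.Def.archi_bound `|x|); apply: le_trans (ler_norm x) _.
exact/ltW/archi_boundP/normr_ge0.
Qed.

Section Blocks.
Variable L : nat -> nat.
Hypothesis L_gt0 : forall k, (0 < L k)%N.

Definition block_start K := (\sum_(k < K) L k)%N.

Lemma block_startS K : block_start K.+1 = (block_start K + L K)%N.
Proof. by rewrite /block_start big_ord_recr. Qed.

Lemma block_start_mono k k' : (k <= k')%N -> (block_start k <= block_start k')%N.
Proof. by move=> /subnK <-; elim: (k' - k)%N => // d IH; rewrite addSn block_startS; lia. Qed.

Lemma block_start_ge K : (K <= block_start K)%N.
Proof. by elim: K => // K IH; rewrite block_startS; have := L_gt0 K; lia. Qed.

Lemma exists_block t : exists k, (t < block_start k.+1)%N.
Proof. by exists t; apply: block_start_ge. Qed.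

Definition block_of t := ex_minn (exists_block t).

Lemma block_of_spec t : (block_start (block_of t) <= t < block_start (block_of t).+1)%N.
Proof.
rewrite /block_of; case: ex_minnP => k lt_t min_k; rewrite lt_t andbT.
case: k lt_t min_k => [|k] _ min_k; first by rewrite /block_start big_ord0.
by rewrite leqNgt; apply/negP => /min_k; lia.
Qed.

Lemma block_ofE k t : (block_start k <= t < block_start k.+1)%N -> block_of t = k.
Proof.
move=> /andP [ge_t lt_t]; have /andP [ge_t' lt_t'] := block_of_spec t.
by case: (ltngtP (block_of t) k) => // /block_start_mono; lia.
Qed.

Lemma block_of_gt K t : (block_start K.+1 <= t)%N -> (K < block_of t)%N.
Proof.
move=> le_t; have /andP [_ lt_t] := block_of_spec t; rewrite ltnNge.
by apply/negP => /(@block_start_mono (block_of t).+1 K.+1); lia.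
Qed.

Variables (V : nmodType) (term : nat -> nat -> V).

Definition unblock t := term (block_of t) (t - block_start (block_of t)).

Lemma sum_unblock_prefix K r : (r <= L K)%N ->
  \sum_(0 <= t < block_start K + r) unblock t =
  \sum_(0 <= t < block_start K) unblock t + \sum_(0 <= i < r) term K i.
Proof.
move=> le_r; rewrite (big_cat_nat (leq0n _) (leq_addr r _)) /=; congr (_ + _).
rewrite -{1}(add0n (block_start K)) big_addn addKn; apply: eq_big_nat => i /andP [_ lt_i].
by rewrite /unblock (@block_ofE K) ?addnK // block_startS; apply/andP; split; lia.
Qed.

Lemma sum_unblock K :
  \sum_(0 <= t < block_start K) unblock t = \sum_(0 <= k < K) \sum_(0 <= i < L k) term k i.
Proof.
elim: K => [|K IH]; first by rewrite /block_start big_ord0 !big_geq.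
by rewrite block_startS sum_unblock_prefix // IH big_nat_recr.
Qed.

Lemma sum_unblock_block t :
  \sum_(0 <= s < t) unblock s =
  \sum_(0 <= k < block_of t) \sum_(0 <= i < L k) term k i +
  \sum_(0 <= i < t - block_start (block_of t)) term (block_of t) i.
Proof.
have /andP [ge_t lt_t] := block_of_spec t.
rewrite -{1}(subnKC ge_t) sum_unblock_prefix ?sum_unblock //.
by move: lt_t; rewrite block_startS; lia.
Qed.

End Blocks.

Section Completion.
Variables (F : fieldType) (RR : realType) (m n B : nat)
  (v : 'I_m -> 'I_n -> int) (lam : 'I_m -> RR).
Variables (g : nat -> ser RR m n F B) (supp : nat -> seq (mono m n B))
  (Nc : nat -> nat) (N0 : nat) (C : {ffun 'I_n -> int} -> 'I_m -> nat).
Hypothesis g_supp : forall N mo l, g N mo l != 0 -> mo \in supp N.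
Hypothesis g_nov : forall N mo, is_nov (g N mo).
Hypothesis g_cauchy : forall j p q : nat, (Nc j <= p)%N -> (Nc j <= q)%N ->
  val_ge v lam (ser_sub (g p) (g q)) j%:R.
Hypothesis g_ge0 : forall p, (N0 <= p)%N -> val_ge v lam (g p) 0.
Hypothesis C_spec : forall fy, yexp v (C fy) = fy /\ forall E l : RR,
  (forall u, intP v lam u -> E <= l + pairing fy u) -> E <= l + tshift lam (C fy).

Fixpoint cidx k := if k is k'.+1 then maxn (cidx k') (Nc k) else maxn N0 (Nc 0).

Lemma cidx_mono k k' : (k <= k')%N -> (cidx k <= cidx k')%N.
Proof.
move=> /subnK <-; elim: (k' - k)%N => // d IH; rewrite addSn /=.
exact: leq_trans IH (leq_maxl _ _).
Qed.

Lemma cidx_Nc k : (Nc k <= cidx k)%N.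
Proof. by case: k => [|k] /=; rewrite leq_maxr. Qed.

Lemma cidx_N0 k : (N0 <= cidx k)%N.
Proof. exact: leq_trans (leq_maxl _ _) (cidx_mono (leq0n k)). Qed.

Definition gdiff k : ser RR m n F B := fun mo l =>
  if k is k'.+1 then g (cidx k) mo l - g (cidx k') mo l else g (cidx 0) mo l.

Lemma sum_gdiff K mo l : \sum_(0 <= k < K.+1) gdiff k mo l = g (cidx K) mo l.
Proof. by elim: K => [|K IH]; rewrite ?big_nat1 // big_nat_recr //= IH /gdiff; ring. Qed.

Lemma gdiff_val_ge k : val_ge v lam (gdiff k) k.-1%:R.
Proof.
case: k => [|k] u int_u mo l nz; first exact: (g_ge0 (cidx_N0 0)) nz.
apply: (g_cauchy (p := cidx k.+1) (q := cidx k) _ _ int_u nz); last exact: cidx_Nc.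
exact: leq_trans (cidx_Nc k) (cidx_mono (leqnSn k)).
Qed.

Definition dsupp k := undup (supp (cidx k) ++ supp (cidx k.-1)).

Lemma gdiff_supp k mo l : gdiff k mo l != 0 -> mo \in dsupp k.
Proof.
rewrite /dsupp mem_undup mem_cat; case: k => [/g_supp ->//|k /addr_neq0 [/g_supp ->//|]].
by rewrite oppr_eq0 => /g_supp ->; rewrite orbT.
Qed.

Definition mono0 : mono m n B := ([ffun=> 0], [ffun=> 0%N], [ffun=> 0]).

Definition dterm k i mo l :=
  if (i < size (dsupp k))%N && (mo == nth mono0 (dsupp k) i) then gdiff k mo l else 0.

Lemma sum_dterm k r mo l : (size (dsupp k) <= r)%N ->
  \sum_(0 <= i < r) dterm k i mo l = gdiff k mo l.
Proof.
move=> le_r; rewrite (big_cat_nat (leq0n _) le_r) /= [X in _ + X]big1_seq ?addr0; last first.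
  move=> i /andP [_]; rewrite mem_index_iota => /andP [le_i _].
  by rewrite /dterm ltnNge le_i.
have uniq_d : uniq (dsupp k) by apply: undup_uniq.
rewrite (eq_big_nat _ _ (F2 := fun i => if mo == nth mono0 (dsupp k) i then gdiff k mo l else 0));
  last by move=> i /andP [_ lt_i]; rewrite /dterm lt_i.
rewrite -(big_nth mono0 xpredT (fun x => if mo == x then gdiff k mo l else 0)).
have [d_mo|] := boolP (mo \in dsupp k).
  rewrite (bigD1_seq mo) //= eqxx big1 ?addr0 // => x ne_x.
  by rewrite eq_sym (negbTE ne_x).
move=> nd_mo; rewrite big1_seq => [|x /andP [_ dx]]; last by case: eqP dx nd_mo => // ->->.
by apply/esym/eqP; apply: contraNT nd_mo => /gdiff_supp.
Qed.

(* The padding by [cidx k] makes block [k.+1] start after [cidx k]. *)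
Definition blen k := (size (dsupp k) + cidx k).+1.

Lemma blen_gt0 k : (0 < blen k)%N. Proof. by []. Qed.

Local Notation bidx := (block_of blen_gt0).
Local Notation bstart := (block_start blen).

Definition tpos t := (t - bstart (bidx t))%N.
Definition tmono t := nth mono0 (dsupp (bidx t)) (tpos t).

Definition coef t (l : RR) := dterm (bidx t) (tpos t) (tmono t) (l - tshift lam (C (tmono t).2)).
Definition wexp t := (tmono t).1.1.
Definition w'exp t := (tmono t).1.2.
Definition zexp t := C (tmono t).2.
Local Notation series := (psum v lam coef wexp w'exp zexp).

Lemma sterm_unblock t mo l :
  sterm v lam coef wexp w'exp zexp t mo l = dterm (bidx t) (tpos t) mo l.
Proof.
rewrite /sterm; have -> : (wexp t, w'exp t, yexp v (zexp t)) = tmono t.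
  by rewrite /zexp (proj1 (C_spec _)) /wexp /w'exp; case: (tmono t) => [[]].
rewrite /coef /dterm -/(tmono t).
by case: (eqVneq mo (tmono t)) => [->|_]; rewrite ?eqxx ?andbT ?andbF ?addrK.
Qed.

Lemma psum_unblock t mo l : series t mo l =
  \sum_(0 <= k < bidx t) gdiff k mo l + \sum_(0 <= i < tpos t) dterm (bidx t) i mo l.
Proof.
rewrite /psum -(big_mkord xpredT (fun s => sterm v lam coef wexp w'exp zexp s mo l)).
under eq_bigr => s _ do rewrite sterm_unblock.
rewrite (sum_unblock_block blen_gt0 (fun k i => dterm k i mo l)).
by congr (_ + _); apply: eq_big_nat => k _; apply: sum_dterm; rewrite /blen; lia.
Qed.

Lemma gdiff_nov k mo : is_nov (gdiff k mo).
Proof. by case: k => [|k]; [apply: g_nov|apply: is_novB]. Qed.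

Lemma dterm_nov k i mo : is_nov (dterm k i mo).
Proof. by rewrite /dterm; case: (_ && _) => /=; [apply: gdiff_nov|apply: is_nov0]. Qed.

Lemma dterm_val_ge k i : val_ge v lam (dterm k i) k.-1%:R.
Proof.
move=> u int_u mo l; rewrite /dterm; case: ifP => _; first exact: gdiff_val_ge.
by rewrite eqxx.
Qed.

Lemma coef_val_ge t l : coef t l != 0 -> (bidx t).-1%:R <= l.
Proof.
rewrite /coef -/(zexp t) => nz; rewrite -(subrK (tshift lam (zexp t)) l).
apply: (proj2 (C_spec _)) => u int_u.
by have := dterm_val_ge int_u nz.
Qed.

Lemma coef_ok : coeff_ok coef.
Proof.
split=> [t|E].
  split=> [|l /coef_val_ge]; last exact: le_trans (ler0n _ _).
  by apply: is_nov_shift; apply: dterm_nov.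
have [K0 le_E] := exists_nat_ge E; exists (bstart K0.+1) => t le_t l /coef_val_ge.
apply: le_trans; apply: le_trans le_E _; rewrite ler_nat.
by have := block_of_gt blen_gt0 le_t; lia.
Qed.

Lemma cidx_le_bstart k : (cidx k <= bstart k.+1)%N.
Proof. by rewrite block_startS /blen; lia. Qed.

Lemma series_same_lim : same_limP v lam g series.
Proof.
move=> E; have [K0 le_E] := exists_nat_ge E.
exists (bstart K0.+1) => p le_p u int_u mo l.
have /andP [ge_p _] := block_of_spec blen_gt0 p.
move: (block_of_gt blen_gt0 le_p) ge_p; case bp: (bidx p) => [//|K] lt_K0 ge_p.
have le_K : E <= K%:R by apply: le_trans le_E _; rewrite ler_nat.
rewrite /ser_sub /= psum_unblock bp sum_gdiff opprD addrA => /addr_neq0 [nz|].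
  have le_Np : (Nc K <= p)%N := leq_trans (cidx_Nc K) (leq_trans (cidx_le_bstart K) ge_p).
  exact: le_trans le_K (g_cauchy le_Np (cidx_Nc K) int_u nz).
rewrite oppr_eq0 => /sum_neq0 [i _ nz].
by have /= := dterm_val_ge int_u nz; apply: le_trans.
Qed.

End Completion.

Lemma inLam0P_moduli (F : fieldType) (RR : realType) (m n B : nat)
  (v : 'I_m -> 'I_n -> int) (lam : 'I_m -> RR) (g : nat -> ser RR m n F B) :
  inLam0P v lam g -> exists (supp : nat -> seq (mono m n B)) (Nc : nat -> nat) (N0 : nat),
  [/\ forall N mo l, g N mo l != 0 -> mo \in supp N,
      forall N mo, is_nov (g N mo),
      forall j p q : nat, (Nc j <= p)%N -> (Nc j <= q)%N ->
        val_ge v lam (ser_sub (g p) (g q)) j%:R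
    & forall p, (N0 <= p)%N -> val_ge v lam (g p) 0].
Proof.
move=> [[g_poly g_cauchy] [N0 g_ge0]].
have [supp g_supp] := @choice _ _ _ (fun N => proj1 (g_poly N)).
have [Nc Nc_spec] := @choice _ _ _ (fun j : nat => g_cauchy j%:R).
by exists supp, Nc, N0; split=> // N; case: (g_poly N).
Qed.

Unset Implicit Arguments.
Theorem lemma3p9 (F : fieldType) (RR : realType) (m n B : nat)
  (v : 'I_m -> 'I_n -> int) (lam : 'I_m -> RR) :
  [pchar F] =i pred0 -> (m <= B)%N -> delzant v lam ->
  (forall (a : nat -> RR -> F) (e : nat -> {ffun 'I_m -> int})
          (e' : nat -> {ffun 'I_(B - m) -> nat}) (f : nat -> 'I_m -> nat),
      coeff_ok a -> inLam0P v lam (psum v lam a e e' f)) /\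
  (forall g : nat -> ser RR m n F B, inLam0P v lam g ->
      exists (a : nat -> RR -> F) (e : nat -> {ffun 'I_m -> int})
             (e' : nat -> {ffun 'I_(B - m) -> nat}) (f : nat -> 'I_m -> nat),
        coeff_ok a /\ same_limP v lam g (psum v lam a e e' f)).
Proof.
move=> _ _ hD; split=> [a e e' f a_ok|g g_lim]; first exact: psum_inLam0P.
have [supp [Nc [N0 [g_supp g_nov g_cauchy g_ge0]]]] := inLam0P_moduli g_lim.
have [C C_spec] := @choice _ _ _ (yexp_decomposition hD).
have coef_ok := coef_ok supp g_nov g_cauchy g_ge0 C_spec.
have series_lim := series_same_lim g_supp g_cauchy g_ge0 C_spec.
by do 4 eexists; split; [exact: coef_ok|exact: series_lim].
Qed.
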